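(* Let $d\ge1$, $n\in\mathbb{N}$, and fix $s_1\ge0$, $s_2\le0$, $\alpha>0$, $\beta>0$. Let $g\in L^2(\mathbb{T}^d;\mathbb{C})$ with coefficients $\widehat{\mathbf G}=(\hat g_k)_{k\ne0}$ and $g_n\in\mathcal{T}_n$ with coefficients $\widehat{\mathbf G}_n=(\hat g_{n,k})_{k\ne0}$ (zero for $k\notin\mathbb{Z}^d_n$). For $k\ne0$ let $D_k=\alpha\beta|k|^{2(s_2-s_1)}+\alpha+\beta|k|^{2s_2}$ and define $$\mathbf u=\Big(\frac{\alpha\beta|k|^{2(s_2-s_1)}\hat g_k}{D_k}\Big)_{k\ne0},\quad \mathbf v=\Big(\frac{\alpha\hat g_k}{D_k}\Big)_{k\ne0},$$ and $\mathbf u_n,\mathbf v_n$ by the same formulas with $\hat g_{n,k}$ in place of $\hat g_k$ for $k\in\mathbb{Z}^d_n\setminus\{0\}$ and zero for $k\notin\mathbb{Z}^d_n$. (So $(\mathbf u,\mathbf v)$ is the coefficient pair of the minimizer of $I(u,v)=\frac12\|(-\Delta)^{s_1/2}u\|^2+\frac\alpha2\|u+v-g\|^2+\frac\beta2\|R_{s_2/2}(v)\|^2$, and $(\mathbf u_n,\mathbf v_n)$ that of the minimizer of the same functional over $\mathcal{T}_n$ with data $g_n$.) Then $$|\mathbf u-\mathbf u_n|^2_{s_1}+\beta|\mathbf v_n-\mathbf v|^2_{s_2}+\frac\alpha2\|\mathbf u_n+\mathbf v_n-\mathbf u-\mathbf v\|^2_{\ell^2}\le\frac\alpha2\|\widehat{\mathbf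 G}-\widehat{\mathbf G}_n\|^2_{\ell^2}.$$
   Context: $\mathbb{T}^d=\mathbb{R}^d/(2\pi\mathbb{Z})^d$; $\hat u_k=\int_{\mathbb{T}^d}u\,e^{-ik\cdot x}dx$. $\mathbb{Z}^d_n=\{k\in\mathbb{Z}^d:-n/2\le k_i\le n/2-1\ \forall i\}$ and $\mathcal{T}_n$ is the space of trigonometric polynomials $\sum_{k\in\mathbb{Z}^d_n}c_ke^{ik\cdot x}$. $(-\Delta)^\sigma u=(2\pi)^{-d}\sum_k|k|^{2\sigma}\hat u_ke^{ik\cdot x}$, and for $\sigma\le0$, $R_\sigma(u)=(2\pi)^{-d}\sum_{k\ne0}|k|^{2\sigma}\hat u_ke^{ik\cdot x}$. For a sequence $\mathbf w=(w_k)_{k\ne0}$ and $\sigma\in\mathbb{R}$, $|\mathbf w|_\sigma=\big(\sum_{k\ne0}|k|^{2\sigma}|w_k|^2\big)^{1/2}$. *)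

From HB Require Import structures.
From mathcomp Require Import all_boot all_order all_algebra.
From mathcomp Require Import all_classical all_reals all_analysis.
From mathcomp Require Import complex.
Set Implicit Arguments. Unset Strict Implicit. Unset Printing Implicit Defensive.
Import Order.TTheory GRing.Theory Num.Theory.
Local Open Scope ring_scope.
Local Open Scope classical_set_scope.
Local Open Scope complex_scope.
Local Open Scope ring_scope.

(* Lattice frequencies k in Z^d are row vectors 'rV[int]_d.
   Coefficient sequences are functions 'rV[int]_d -> R[i] (complex numbers
   over the reals R); only the values at k <> 0 are ever used. *)

Section Defs.
Variable R : realType.
Variable d : nat.

Definition knorm2 (k : 'rV[int]_d) : R := \sum_(i < d) ((k ord0 i)%:~R) ^+ 2.

Definition kpow (sigma : R) (k : 'rV[int]_d) : R := knorm2 k `^ sigma.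

Definition cabs2 (z : R[i]) : R := (@complex.Re R z) ^+ 2 + (@complex.Im R z) ^+ 2.

Definition snorm2 (sigma : R) (w : 'rV[int]_d -> R[i]) : \bar R :=
  \esum_(k in [set k : 'rV[int]_d | k != 0]) (kpow sigma k * cabs2 (w k))%:E.

(* k \in Z^d_n :  -n/2 <= k_i <= n/2 - 1 for all i *)
Definition inZdn (n : nat) (k : 'rV[int]_d) : bool :=
  [forall i : 'I_d, (- (n%:Z) <= 2 * k ord0 i) && (2 * k ord0 i <= n%:Z - 2)].

Definition Dk (s1 s2 alpha beta : R) (k : 'rV[int]_d) : R :=
  alpha * beta * kpow (s2 - s1) k + alpha + beta * kpow s2 k.

Definition ucoef (s1 s2 alpha beta : R) (G : 'rV[int]_d -> R[i]) (k : 'rV[int]_d) : R[i] :=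
  ((alpha * beta * kpow (s2 - s1) k) / Dk s1 s2 alpha beta k)%:C * G k.

Definition vcoef (s1 s2 alpha beta : R) (G : 'rV[int]_d -> R[i]) (k : 'rV[int]_d) : R[i] :=
  (alpha / Dk s1 s2 alpha beta k)%:C * G k.

Definition ucoef_n (n : nat) (s1 s2 alpha beta : R) (Gn : 'rV[int]_d -> R[i]) (k : 'rV[int]_d) : R[i] :=
  if inZdn n k then ucoef s1 s2 alpha beta Gn k else 0.

Definition vcoef_n (n : nat) (s1 s2 alpha beta : R) (Gn : 'rV[int]_d -> R[i]) (k : 'rV[int]_d) : R[i] :=
  if inZdn n k then vcoef s1 s2 alpha beta Gn k else 0.

End Defs.

From HB Require Import structures.
From mathcomp Require Import all_boot all_order all_algebra.
From mathcomp Require Import all_classical all_reals all_analysis.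
From mathcomp Require Import complex ring lra.
Import Order.TTheory GRing.Theory Num.Theory.
Local Open Scope ring_scope.
Local Open Scope classical_set_scope.

(* Every operator involved is a Fourier multiplier, so the estimate holds mode
   by mode.  As G_n vanishes off Z^d_n, the discrete coefficients are the
   continuous formulas applied to G_n, and the three errors are the real
   multipliers P = alpha beta |k|^(2(s2-s1)) / D_k, -Q = -alpha / D_k and
   -(P + Q) applied to e_k = G_k - G_{n,k}.  With a = |k|^(2 s1) and
   b = |k|^(2 s2) one has 1 - P - Q = beta b / D_k, whence
   a P^2 + beta b Q^2 + alpha/2 (P + Q)^2 = alpha/2 (1 - (beta b / D_k)^2). *)

Lemma esumZl (R : realType) (T : choiceType) (I : set T) (a : T -> \bar R) (r : R) :
  0 < r -> (forall i, (0 <= a i)%E) ->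
  (r%:E * (\esum_(i in I) a i) = \esum_(i in I) (r%:E * a i))%E.
Proof.
move=> r_gt0 a_ge0; rewrite /esum -ereal_sup_pZl //; congr ereal_sup.
rewrite image_comp; apply: eq_imagel => A [finA subA] /=.
by rewrite !fsbig_finite // ge0_sume_distrr.
Qed.

Section Multiplier.
Context {R : realFieldType} {a b alpha beta : R}.
Hypotheses (a_gt0 : 0 < a) (b_ge0 : 0 <= b) (alpha_gt0 : 0 < alpha) (beta_gt0 : 0 < beta).

Let D := alpha * beta * (b / a) + alpha + beta * b.
Let P := alpha * beta * (b / a) / D.
Let Q := alpha / D.

Lemma multiplier_energy_le :
  a * P ^+ 2 + beta * b * Q ^+ 2 + alpha / 2 * (P + Q) ^+ 2 <= alpha / 2.
Proof.
have D_gt0 : 0 < D.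
  have ab_ge0 : 0 <= alpha * beta * (b / a).
    by apply: mulr_ge0; [apply: mulr_ge0 | apply: divr_ge0] => //; exact: ltW.
  have beta_b_ge0 : 0 <= beta * b by apply: mulr_ge0; [exact: ltW|].
  by rewrite /D ltr_wpDr // ltr_wpDl.
have energy : a * P ^+ 2 + beta * b * Q ^+ 2 + alpha / 2 * (P + Q) ^+ 2
              = alpha / 2 - alpha / 2 * (beta * b / D) ^+ 2.
  (* the nonvanishing condition left by [field], cleared of denominators *)
  have aD : alpha * beta * b + alpha * a + beta * b * a = a * D.
    by rewrite /D; field; rewrite gt_eqF.
  by rewrite /P /Q /D; field; rewrite aD mulf_neq0 ?gt_eqF.
rewrite energy lerBlDr lerDl.
by rewrite mulr_ge0 ?sqr_ge0 // divr_ge0 ?ltW.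
Qed.

End Multiplier.

Section FourierCoefficients.
Context {R : realType} {d : nat}.
Implicit Types (z : R[i]) (k : 'rV[int]_d) (w : 'rV[int]_d -> R[i]).

Lemma cabs2_ge0 z : 0 <= cabs2 z.
Proof. by rewrite addr_ge0 ?sqr_ge0. Qed.

Lemma cabs2N z : cabs2 (- z) = cabs2 z.
Proof. by case: z => x y; rewrite /cabs2 /= !sqrrN. Qed.

Lemma cabs2_realM (r : R) z : cabs2 ((r%:C)%C * z) = r ^+ 2 * cabs2 z.
Proof. by case: z => x y; rewrite /cabs2 /=; ring. Qed.

Lemma knorm2_gt0 k : k != 0 -> 0 < knorm2 R k.
Proof.
move=> k_neq0; have [j kj_neq0] : exists j, k ord0 j != 0.
  apply/existsP; apply: contraR k_neq0 => /existsPn k0; apply/eqP/rowP => j.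
  by rewrite mxE; apply/eqP/negPn/k0.
rewrite /knorm2 (bigD1 j) //= ltr_pwDl ?sumr_ge0 // => [|i _]; last exact: sqr_ge0.
by rewrite exprn_even_gt0 // intr_eq0.
Qed.

Lemma kpow0 k : kpow 0 k = 1 :> R.
Proof. exact: powRr0. Qed.

Lemma kpow_gt0 (s : R) k : k != 0 -> 0 < kpow s k.
Proof. by move=> /knorm2_gt0; apply: powR_gt0. Qed.

Lemma kpowB (s t : R) k : k != 0 -> kpow (s - t) k = kpow s k / kpow t k.
Proof.
by move=> /knorm2_gt0 k_gt0; rewrite /kpow powRB // (gt_eqF k_gt0) implybT.
Qed.

Lemma snorm2_term_ge0 (s : R) k z : 0 <= kpow s k * cabs2 z.
Proof. by rewrite mulr_ge0 ?powR_ge0 ?cabs2_ge0. Qed.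

Lemma snorm2_termZ_ge0 (c s : R) k z : 0 <= c -> 0 <= c * (kpow s k * cabs2 z).
Proof. by move=> c_ge0; rewrite mulr_ge0 ?snorm2_term_ge0. Qed.

Lemma snorm2N (s : R) w : snorm2 s (fun k => - w k) = snorm2 s w.
Proof. by apply: eq_esum => k _; rewrite cabs2N. Qed.

Lemma snorm2Zl (r s : R) w : 0 < r ->
  (r%:E * snorm2 s w
   = \esum_(k in [set k : 'rV[int]_d | k != 0%R]) (r * (kpow s k * cabs2 (w k)))%:E)%E.
Proof.
by move=> r_gt0; rewrite /snorm2 esumZl // => k; rewrite lee_fin snorm2_term_ge0.
Qed.

Variables (s1 s2 alpha beta : R).

Lemma ucoefB G H k :
  ucoef s1 s2 alpha beta G k - ucoef s1 s2 alpha beta H k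
  = ucoef s1 s2 alpha beta (fun k => G k - H k) k.
Proof. exact/esym/mulrBr. Qed.

Lemma vcoefB G H k :
  vcoef s1 s2 alpha beta G k - vcoef s1 s2 alpha beta H k
  = vcoef s1 s2 alpha beta (fun k => G k - H k) k.
Proof. exact/esym/mulrBr. Qed.

Section Truncation.
Variables (n : nat) (G Gn : 'rV[int]_d -> R[i]).
Hypothesis Gn_supp : forall k, ~~ inZdn n k -> Gn k = 0.
Let e k := G k - Gn k.

Lemma ucoef_nE : ucoef_n n s1 s2 alpha beta Gn =1 ucoef s1 s2 alpha beta Gn.
Proof.
by move=> k; rewrite /ucoef_n; case: ifPn => // /Gn_supp; rewrite /ucoef => ->; rewrite mulr0.
Qed.

Lemma vcoef_nE : vcoef_n n s1 s2 alpha beta Gn =1 vcoef s1 s2 alpha beta Gn.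
Proof.
by move=> k; rewrite /vcoef_n; case: ifPn => // /Gn_supp; rewrite /vcoef => ->; rewrite mulr0.
Qed.

Lemma ucoef_n_error :
  (fun k => ucoef s1 s2 alpha beta G k - ucoef_n n s1 s2 alpha beta Gn k)
  = ucoef s1 s2 alpha beta e.
Proof. by apply/funext => k; rewrite ucoef_nE ucoefB. Qed.

Lemma vcoef_n_error :
  (fun k => vcoef_n n s1 s2 alpha beta Gn k - vcoef s1 s2 alpha beta G k)
  = (fun k => - vcoef s1 s2 alpha beta e k).
Proof. by apply/funext => k; rewrite vcoef_nE -opprB vcoefB. Qed.

Lemma coef_n_sum_error :
  (fun k => ucoef_n n s1 s2 alpha beta Gn k + vcoef_n n s1 s2 alpha beta Gn k
            - ucoef s1 s2 alpha beta G k - vcoef s1 s2 alpha beta G k)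
  = (fun k => - (ucoef s1 s2 alpha beta e k + vcoef s1 s2 alpha beta e k)).
Proof.
by apply/funext => k; rewrite ucoef_nE vcoef_nE -ucoefB -vcoefB; ring.
Qed.

End Truncation.

Hypotheses (alpha_gt0 : 0 < alpha) (beta_gt0 : 0 < beta).

Lemma coef_energy_le G k : k != 0 ->
  kpow s1 k * cabs2 (ucoef s1 s2 alpha beta G k)
  + beta * (kpow s2 k * cabs2 (vcoef s1 s2 alpha beta G k))
  + alpha / 2 * (kpow 0 k * cabs2 (ucoef s1 s2 alpha beta G k + vcoef s1 s2 alpha beta G k))
  <= alpha / 2 * (kpow 0 k * cabs2 (G k)).
Proof.
move=> k_neq0; rewrite /ucoef /vcoef -mulrDl -rmorphD !cabs2_realM kpow0 !mul1r.
rewrite /Dk kpowB //.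
have := multiplier_energy_le (kpow_gt0 s1 k k_neq0) (ltW (kpow_gt0 s2 k k_neq0))
  alpha_gt0 beta_gt0.
by have := cabs2_ge0 (G k); nra.
Qed.

End FourierCoefficients.

Theorem lemma8 (R : realType) (d n : nat) (hd : (1 <= d)%N)
  (s1 s2 alpha beta : R)
  (hs1 : 0 <= s1) (hs2 : s2 <= 0) (halpha : 0 < alpha) (hbeta : 0 < beta)
  (G Gn : 'rV[int]_d -> R[i])
  (hG : (snorm2 0 G < +oo)%E)
  (hGn : forall k : 'rV[int]_d, ~~ inZdn n k -> Gn k = 0) :
  let u := ucoef s1 s2 alpha beta G in
  let v := vcoef s1 s2 alpha beta G in
  let un := ucoef_n n s1 s2 alpha beta Gn in
  let vn := vcoef_n n s1 s2 alpha beta Gn in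
  (snorm2 s1 (fun k => (u k - un k)%R)
   + beta%:E * snorm2 s2 (fun k => (vn k - v k)%R)
   + (alpha / 2)%:E * snorm2 0 (fun k => (un k + vn k - u k - v k)%R)
   <= (alpha / 2)%:E * snorm2 0 (fun k => (G k - Gn k)%R))%E.
Proof.
cbv zeta; rewrite ucoef_n_error // vcoef_n_error // coef_n_sum_error //.
have half_alpha_gt0 : 0 < alpha / 2 by rewrite divr_gt0.
rewrite !snorm2N !snorm2Zl // {1}/snorm2 -!esumD => [|k _|k _|k _|k _].
- by apply: le_esum => k /= k_neq0; rewrite -!EFinD lee_fin coef_energy_le.
all: rewrite -?EFinD lee_fin.
- by rewrite addr_ge0 ?snorm2_term_ge0 ?snorm2_termZ_ge0 ?ltW.
- by rewrite snorm2_termZ_ge0 ?ltW.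
- exact: snorm2_term_ge0.
- by rewrite snorm2_termZ_ge0 ?ltW.
Qed.
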